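(* Let $q\ge 2$ be a prime power and $\xi\in\mathbb{F}_q\setminus\{0\}$. The set $$B=\bigcup_{c\in\mathbb{F}_q}N_{\Gamma_q}[(q,0,c)_1]\ \cup\ N_{\Gamma_q}[(q,q,0)_1]\ \cup\ \Big(\bigcap_{c\in\mathbb{F}_q}N^2_{\Gamma_q}[(q,0,c)_1]\cap N^2_{\Gamma_q}[(q,q,0)_1]\Big)\ \cup\ N^2_{\Gamma_q}[(q,q,\xi)_1]$$ is a perfect dominating set of $\Gamma_q$, and $|B|=2(q^2+3q+1)$.
   Context: Let $q\ge 2$ be a prime power and $\mathbb{F}_q$ the field with $q$ elements; in the vertex labels below the symbol $q$ is also used as an extra formal symbol not belonging to $\mathbb{F}_q$, and all arithmetic is in $\mathbb{F}_q$. $\Gamma_q$ is the bipartite graph with parts $V_0,V_1$, where for $r\in\{0,1\}$ the set $V_r$ consists of the vertices $(a,b,c)_r$ with $a\in\mathbb{F}_q\cup\{q\}$, $b,c\in\mathbb{F}_q$, together with the vertices $(q,q,a)_r$ with $a\in\mathbb{F}_q\cup\{q\}$. The edges are given by: for $a,b,c\in\mathbb{F}_q$, $N((a,b,c)_1)=\{(x,\,ax+b,\,a^2x+2ab+c)_0: x\in\mathbb{F}_q\}\cup\{(q,a,c)_0\}$; for $b,c\in\mathbb{F}_q$, $N((q,b,c)_1)=\{(c,b,x)_0: x\in\mathbb{F}_q\}\cup\{(q,q,c)_0\}$; for $a\in\mathbb{F}_q\cup\{q\}$, $N((q,q,a)_1)=\{(q,a,x)_0: x\in\mathbb{F}_q\}\cup\{(q,q,q)_0\}$.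 There are no other edges. For a graph $G$, $d_G$ is the distance, $N^t_G[u]=\{x: d_G(u,x)\le t\}$, $N_G[u]=N^1_G[u]$. A set $U\subseteq V(G)$ is a perfect dominating set of $G$ if every vertex $x\in V(G)\setminus U$ has exactly one neighbour in $U$. *)

From HB Require Import structures.
From mathcomp Require Import all_boot all_order all_algebra all_field.
Set Implicit Arguments. Unset Strict Implicit. Unset Printing Implicit Defensive.
Import GRing.Theory.
Local Open Scope ring_scope.

(* Labels of vertices of Gamma_q over a finite field F (q = #|F|).
   [option F] encodes F_q ∪ {q}: [None] stands for the formal symbol q.
   inl (a, b, c)  encodes (a,b,c) with a ∈ F_q ∪ {q}, b, c ∈ F_q;
   inr a          encodes (q,q,a) with a ∈ F_q ∪ {q}. *)
Definition label (F : finFieldType) : finType :=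
  ((option F * F * F) + option F)%type.

(* A vertex is a label together with its part r : bool (true = V_1, false = V_0). *)
Definition vertex (F : finFieldType) : finType := (label F * bool)%type.

Definition lab (F : finFieldType) (a : option F) (b c : F) : label F := inl (a, b, c).
Definition labqq (F : finFieldType) (a : option F) : label F := inr a.

(* adj1 x y : the V_1-vertex with label x is adjacent to the V_0-vertex with label y. *)
Definition adj1 (F : finFieldType) (x y : label F) : bool :=
  match x with
  | inl (Some a, b, c) =>
      match y with
      | inl (Some t, y2, y3) => (y2 == a * t + b) && (y3 == a ^+ 2 * t + 2%:R * a * b + c)
      | inl (None, y2, y3) => (y2 == a) && (y3 == c)
      | inr _ => false
      end
  | inl (None, b, c) =>
      match y with
      | inl (Some y1, y2, _) => (y1 == c) && (y2 == b)
      | inl (None, _, _) => false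
      | inr y1 => y1 == Some c
      end
  | inr a =>
      match a with
      | Some a' =>
          match y with
          | inl (None, y2, _) => y2 == a'
          | inl (Some _, _, _) => false
          | inr y1 => y1 == None
          end
      | None =>
          match y with
          | inl _ => false
          | inr _ => true   (* (q,q,x)_0 for x ∈ F_q, and (q,q,q)_0 *)
          end
      end
  end.

Definition gedge (F : finFieldType) : rel (vertex F) :=
  fun u v =>
    (u.2 && ~~ v.2 && adj1 u.1 v.1) || (v.2 && ~~ u.2 && adj1 v.1 u.1).

(* Closed t-neighbourhood N^t[u] = {x : d(u,x) <= t}, i.e. the vertices reachable
   from u by a walk of length at most t. *)
Definition ball (T : finType) (e : rel T) (t : nat) (u : T) : {set T} :=
  [set x | [exists p : (t.+1).-tuple T,
              [exists k : 'I_(t.+1),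
                 path e u (take k p) && (last u (take k p) == x)]]].

Definition perfect_dominating (T : finType) (e : rel T) (U : {set T}) : Prop :=
  forall x, x \notin U -> #|[set y in U | e x y]| = 1%N.

From mathcomp Require Import all_boot all_algebra all_field ring zify.
Import GRing.Theory.

(* The proof replaces B by an explicit description [in_B] of its members:
     in V_1 : (q,0,c)_1, (0,0,c)_1, (xi,b,c)_1 and every (q,q,a)_1;
     in V_0 : (a,0,c)_0, (q,0,c)_0, (q,xi,c)_0 and every (q,q,a)_0.  Perfect domination
   is checked on the five families of vertices outside in_B, computing their
   unique neighbour in in_B; the only non-combinatorial case is (a,b,c)_1 with
   a not in {0, xi}, whose neighbour is (-b/a, 0, _)_0 because t = -b/a is the
   unique root of a t + b. *)

Set Implicit Arguments. Unset Strict Implicit. Unset Printing Implicit Defensive.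

Lemma inl_eq (A B : eqType) (x y : A) : (@inl A B x == inl y) = (x == y).
Proof. by []. Qed.

Lemma inr_eq (A B : eqType) (x y : B) : (@inr A B x == inr y) = (x == y).
Proof. by []. Qed.

Lemma Some_eq (A : eqType) (x y : A) : (Some x == Some y) = (x == y).
Proof. by []. Qed.

Lemma sum_option (T : finType) (f : option T -> nat) :
  \sum_(i : option T) f i = f None + \sum_(t : T) f (Some t).
Proof.
by rewrite ![index_enum _]unlock [@Finite.enum in LHS]unlock /= big_cons big_map.
Qed.

Lemma sum_pair (I J : finType) (f : I * J -> nat) :
  \sum_(p : I * J) f p = \sum_(i : I) \sum_(j : J) f (i, j).
Proof. by rewrite pair_big; apply: eq_bigr => -[]. Qed.

Lemma sum_const_nat (T : finType) (n : nat) : \sum_(x : T) n = #|T| * n.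
Proof. exact: sum_nat_const. Qed.

Lemma sum_indicator1 (T : finType) (t : T) : \sum_(x : T) (x == t) = 1.
Proof. by rewrite (bigD1 t) //= eqxx big1 // => x /negbTE ->. Qed.

Section Balls.
Variables (T : finType) (e : rel T).

Lemma ballP t u x :
  reflect (exists s : seq T, [/\ size s <= t, path e u s & last u s = x])
          (x \in ball e t u).
Proof.
rewrite inE; apply: (iffP existsP).
  case=> p /existsP [k /andP [hp /eqP hl]]; exists (take k p); split => //.
  by rewrite size_take_min; apply: leq_trans (geq_minl _ _) _; rewrite -ltnS ltn_ord.
case=> s [hs hp hl].
have hsz : size (take t.+1 (s ++ nseq t.+1 u)) == t.+1.
  by rewrite size_takel // size_cat size_nseq leq_addl.
exists (Tuple hsz); apply/existsP; exists (Ordinal (hs : size s < t.+1)).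
by rewrite /= take_takel ?(leqW hs) // (take_size_cat _ (erefl (size s))) hp hl eqxx.
Qed.

Lemma ball1 u x : (x \in ball e 1 u) = (x == u) || e u x.
Proof.
apply/ballP/idP.
  case=> [[|y [|z s]]] [//= hs hp hl]; first by rewrite hl eqxx.
  by move: hp; rewrite hl andbT => ->; rewrite orbT.
case/orP=> [/eqP ->|h]; first by exists [::].
by exists [:: x]; rewrite /= h.
Qed.

Lemma ball2 u x :
  (x \in ball e 2 u) = [|| x == u, e u x | [exists y, e u y && e y x]].
Proof.
apply/ballP/idP.
  case=> [[|y [|z [|w s]]]] [//= hs hp hl]; first by rewrite hl eqxx.
    by move: hp; rewrite hl andbT => ->; rewrite orbT.
  move: hp; rewrite hl andbT => /andP [h1 h2].
  by apply/or3P; apply: Or33; apply/existsP; exists y; rewrite h1.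
case/or3P=> [/eqP ->|h|/existsP [y /andP [h1 h2]]]; first by exists [::].
  by exists [:: x]; rewrite /= h.
by exists [:: y; x]; rewrite /= h1 h2.
Qed.

Lemma ball_center t u : u \in ball e t u.
Proof. by apply/ballP; exists [::]. Qed.

Lemma ball1_edge u x : e u x -> x \in ball e 1 u.
Proof. by move=> h; rewrite ball1 h orbT. Qed.

Lemma ball2_edge u x : e u x -> x \in ball e 2 u.
Proof. by move=> h; rewrite ball2 h orbT. Qed.

Lemma ball2_walk u y x : e u y -> e y x -> x \in ball e 2 u.
Proof. by move=> h1 h2; apply/ballP; exists [:: y; x]; rewrite /= h1 h2. Qed.

Lemma ball1_closed (P : pred T) u x :
  P u -> (forall y, e u y -> P y) -> x \in ball e 1 u -> P x.
Proof. by move=> hu hn; rewrite ball1 => /orP [/eqP -> | /hn]. Qed.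

Lemma card_unique_neighbour (A : {set T}) x y0 :
  (forall y, (y \in A) && e x y = (y == y0)) -> #|[set y in A | e x y]| = 1.
Proof.
move=> hy; have -> : [set y in A | e x y] = [set y0].
  by apply/setP => y; rewrite !inE hy.
by rewrite cards1.
Qed.

End Balls.

Local Open Scope ring_scope.

Lemma affine_root (K : fieldType) (a b t : K) :
  a != 0 -> (0 == a * t + b) = (t == - b / a).
Proof.
move=> a0; apply/eqP/eqP => [h|->]; last by field.
have -> : b = - (a * t) by apply/eqP; rewrite -subr_eq0 opprK addrC -h.
by field.
Qed.

(* Case analysis on the eight shapes of a vertex: (a,b,c)_r, (q,b,c)_r,
   (q,q,a)_r and (q,q,q)_r, discarding the cases that compute to false. *)
Ltac vertex_cases v := case: v => [[[[[? | ] ? ] ?] | [? | ]] []] //=.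

Ltac simpl_field :=
  rewrite ?(mul0r, mulr0, add0r, addr0, expr0n, mulr0n, mul1r, mulr1, eqxx) /=.

(* Decide a boolean goal about concrete vertices: unfold adjacency, split the
   hypotheses into equations, substitute them, and close by computation or by
   an absurd hypothesis x != x. *)
Ltac solve_edges := rewrite /gedge /labqq /lab /= ?andbT ?orbF; simpl_field;
  repeat first [ move=> /andP [] | move=> /orP [] | move=> /eqP; simpl_field; move=> ?; subst ];
  simpl_field; rewrite ?eqxx ?orbT ?andbT //;
  try match goal with h : is_true (?x != ?x) |- _ => by rewrite eqxx in h end.

(* Prove [in_B y && gedge x y = (y == y0)] for a concrete shape of y. *)
Ltac decide_neighbour :=
  rewrite /gedge /lab /labqq /= ?(xpair_eqE, inl_eq, inr_eq, Some_eq) /=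
    ?andbF ?andFb ?orbF ?andbT; simpl_field;
  first [ apply/negbTE/negP | apply/idP/idP ]; solve_edges.

Section Gamma.
Variables (F : finFieldType) (xi : F).
Hypothesis xi_neq0 : xi != 0.

Notation v_q0 c := (lab None 0 c, true).
Notation v_qq a := (labqq a, true).

Definition Bset : {set vertex F} :=
    (\bigcup_(c : F) ball (@gedge F) 1 (v_q0 c))
    :|: ball (@gedge F) 1 (v_qq (Some 0))
    :|: ((\bigcap_(c : F) ball (@gedge F) 2 (v_q0 c))
          :&: ball (@gedge F) 2 (v_qq (Some 0)))
    :|: ball (@gedge F) 2 (v_qq (Some xi)).

Lemma BsetP v :
  reflect [\/ exists c, v \in ball (@gedge F) 1 (v_q0 c),
              v \in ball (@gedge F) 1 (v_qq (Some 0)),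
              (forall c, v \in ball (@gedge F) 2 (v_q0 c))
                /\ v \in ball (@gedge F) 2 (v_qq (Some 0))
            | v \in ball (@gedge F) 2 (v_qq (Some xi))]
          (v \in Bset).
Proof.
rewrite /Bset !in_setU in_setI -!orbA; apply: (iffP or4P) => -[h|h|h|h].
- by apply: Or41; case/bigcupP: h => c _; exists c.
- exact: Or42.
- by apply: Or43; case/andP: h => /bigcapP h ->; split => // c; apply: h.
- exact: Or44.
- by apply: Or41; case: h => c hc; apply/bigcupP; exists c.
- exact: Or42.
- by apply: Or43; case: h => h ->; rewrite andbT; apply/bigcapP => c _.
- exact: Or44.
Qed.

Definition in_B (v : vertex F) : bool :=
  match v with
  | (inl (None, b, _), true) => b == 0
  | (inl (Some a, b, _), true) => (a == 0) && (b == 0) || (a == xi)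
  | (inl (Some _, b, _), false) => b == 0
  | (inl (None, b, _), false) => (b == 0) || (b == xi)
  | (inr _, _) => true
  end.

Lemma ball1_q0_sub c v : v \in ball (@gedge F) 1 (v_q0 c) -> in_B v.
Proof. by apply: ball1_closed => [|w]; [|vertex_cases w]; solve_edges. Qed.

Lemma ball1_qq0_sub v : v \in ball (@gedge F) 1 (v_qq (Some 0)) -> in_B v.
Proof. by apply: ball1_closed => [|w]; [|vertex_cases w]; solve_edges. Qed.

(* Only the ball around (q,0,0)_1 is needed from the intersection over c. *)
Lemma ball2_common_sub v :
  v \in ball (@gedge F) 2 (v_q0 0) -> v \in ball (@gedge F) 2 (v_qq (Some 0)) ->
  in_B v.
Proof.
rewrite !ball2 => /or3P [/eqP -> _|h|/existsP [y /andP [h1 h1']]].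
- by solve_edges.
- by move: h; vertex_cases v; solve_edges.
case/or3P => [/eqP E|h|/existsP [z /andP [h2 h2']]].
- by move: h1 h1'; rewrite E; vertex_cases y; solve_edges.
- by move: h h1 h1'; vertex_cases v; vertex_cases y; solve_edges.
- by move: h1 h1' h2 h2'; vertex_cases v; vertex_cases y; vertex_cases z; solve_edges.
Qed.

Lemma ball2_qqxi_sub v : v \in ball (@gedge F) 2 (v_qq (Some xi)) -> in_B v.
Proof.
rewrite ball2 => /or3P [/eqP ->|h|/existsP [y /andP [h1 h2]]] //.
  by move: h; vertex_cases v; solve_edges.
by move: h1 h2; vertex_cases v; vertex_cases y; solve_edges.
Qed.

Lemma in_B_Bset v : in_B v -> v \in Bset.
Proof.
vertex_cases v.
- case/orP => [/andP [/eqP -> /eqP ->] | /eqP ->].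
    apply/BsetP/Or43; split => [c'|].
      by apply: (@ball2_walk _ _ _ (lab (Some c') 0 _, false)); solve_edges.
    by apply: (@ball2_walk _ _ _ (lab None 0 _, false)); solve_edges.
  by apply/BsetP/Or44/(@ball2_walk _ _ _ (lab None xi _, false)); solve_edges.
- by move/eqP->; apply/BsetP/Or41; eexists; apply: ball1_edge; solve_edges.
- by move/eqP->; apply/BsetP/Or41; eexists; apply: ball_center.
- case/orP => /eqP->.
    by apply/BsetP/Or42/ball1_edge; solve_edges.
  by apply/BsetP/Or44/ball2_edge; solve_edges.
- by move=> _; apply/BsetP/Or44/(@ball2_walk _ _ _ (labqq None, false)); solve_edges.
- by move=> _; apply/BsetP/Or41; eexists; apply: ball1_edge; solve_edges.
- by move=> _; apply/BsetP/Or44/(@ball2_walk _ _ _ (labqq None, false)); solve_edges.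
- by move=> _; apply/BsetP/Or42/ball1_edge; solve_edges.
Qed.

Lemma Bset_explicit : Bset = [set v | in_B v].
Proof.
apply/setP => v; rewrite inE; apply/idP/idP; last exact: in_B_Bset.
case/BsetP => [[c]| | [h0 h]|];
  [exact: ball1_q0_sub | exact: ball1_qq0_sub | | exact: ball2_qqxi_sub].
exact: ball2_common_sub (h0 0) h.
Qed.

Lemma B_neighbour_qbc1 (b c : F) : b != 0 ->
  forall y, in_B y && gedge (lab None b c, true) y = (y == (labqq (Some c), false)).
Proof. by move=> hb y; vertex_cases y; decide_neighbour. Qed.

Lemma B_neighbour_qbc0 (b c : F) : b != 0 -> b != xi ->
  forall y, in_B y && gedge (lab None b c, false) y = (y == (labqq (Some b), true)).
Proof. by move=> hb hbxi y; vertex_cases y; decide_neighbour. Qed.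

Lemma B_neighbour_0bc1 (b c : F) : b != 0 ->
  forall y, in_B y && gedge (lab (Some 0) b c, true) y = (y == (lab None 0 c, false)).
Proof. by move=> hb y; vertex_cases y; decide_neighbour. Qed.

(* (a,b,c)_1 with a not in {0, xi}: its neighbour (t, a t + b, _)_0 lies in
   in_B exactly when a t + b = 0. *)
Lemma B_neighbour_abc1 (a b c : F) : a != 0 -> a != xi ->
  forall y, in_B y && gedge (lab (Some a) b c, true) y =
    (y == (lab (Some (- b / a)) 0 (a ^+ 2 * (- b / a) + 2%:R * a * b + c), false)).
Proof.
move=> ha haxi [[[[[t|] y2] y3] | [?|]] []] //=; try by decide_neighbour.
rewrite /gedge /lab /= ?(xpair_eqE, inl_eq, Some_eq) /= orbF !andbT.
case: (eqVneq y2 0) => [->|_] /=; last by rewrite andbF.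
by rewrite affine_root //; case: eqP => [->|].
Qed.

(* (a,b,c)_0 with b <> 0: its neighbours are (s, b - s a, _)_1, and the only
   one in in_B is the one with s = xi. *)
Lemma B_neighbour_abc0 (a b c : F) : b != 0 ->
  forall y, in_B y && gedge (lab (Some a) b c, false) y =
    (y == (lab (Some xi) (b - xi * a) (c - xi ^+ 2 * a - 2%:R * xi * (b - xi * a)), true)).
Proof.
move=> hb [[[[[s|] y2] y3] | [?|]] []] //=; try by decide_neighbour.
rewrite /gedge /lab /= ?(xpair_eqE, inl_eq, Some_eq) /= !andbT.
case: (eqVneq s xi) => [->|hs] /=.
  rewrite orbT /=; apply/andP/andP => -[/eqP h1 /eqP h2]; split; apply/eqP.
  - by rewrite h1; ring.
  - by rewrite h1 h2; ring.
  - by rewrite h1; ring.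
  - by rewrite h1 h2; ring.
rewrite orbF; apply/negbTE/and3P => -[/andP [/eqP s0 /eqP y0] /eqP b0 _].
by move: hb; rewrite b0 s0 y0 mul0r addr0 eqxx.
Qed.

Lemma in_B_perfect : perfect_dominating (@gedge F) [set v | in_B v].
Proof.
move=> x; rewrite inE.
have unique x' y0 : (forall y, in_B y && gedge x' y = (y == y0)) ->
    #|[set y in [set v | in_B v] | gedge x' y]| = 1%N.
  by move=> h; apply: card_unique_neighbour => y; rewrite inE h.
case: x => [[[[[a|] b] c] | [?|]] []] //=.
- rewrite negb_or negb_and => /andP [ha haxi].
  case: (eqVneq a 0) ha => [-> /= hb | ha _].
    exact/unique/B_neighbour_0bc1.
  exact/unique/B_neighbour_abc1.
- by move=> hb; apply/unique/B_neighbour_abc0.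
- by move=> hb; apply/unique/B_neighbour_qbc1.
- by rewrite negb_or => /andP [hb hbxi]; apply/unique/B_neighbour_qbc0.
Qed.

(* Summing the indicator of in_B over the labels: 2(q + 1) vertices (q,q,_)_r,
   3q vertices (q,b,c)_r and q(2q + 1) vertices (a,b,c)_r. *)
Lemma card_B : #|[set v | in_B v]| = (2 * (#|F| ^ 2 + 3 * #|F| + 1))%N.
Proof.
set q := #|F|.
have xi0 : (0 == xi) = false by rewrite eq_sym (negbTE xi_neq0).
have part_qq : (\sum_(a : option F) (1 + 1) = 2 * q + 2)%N.
  by rewrite sum_const_nat card_option -/q /=; lia.
have part_qbc : (\sum_(b : F) \sum_(c : F)
    ((b == 0%R) + ((b == 0%R) || (b == xi))) = 3 * q)%N.
  have split_b (b : F) : ((b == 0%R) + ((b == 0%R) || (b == xi)) =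
      (b == 0%R) + (b == 0%R) + (b == xi))%N.
    by case: (eqVneq b 0%R) => [->|]; rewrite ?xi0 //= addnA.
  under eq_bigr do rewrite sum_const_nat split_b.
  by rewrite -big_distrr /= !big_split /= !sum_indicator1 mulnC.
have part_abc : (\sum_(a : F) \sum_(b : F) \sum_(c : F)
    (((a == 0%R) && (b == 0%R) || (a == xi)) + (b == 0%R)) = q * (2 * q + 1))%N.
  have split_ab (a b : F) : (((a == 0%R) && (b == 0%R) || (a == xi)) + (b == 0%R) =
      (a == 0%R) * (b == 0%R) + (a == xi) + (b == 0%R))%N.
    by case: (eqVneq a 0%R) => [->|] /=; rewrite ?xi0 //; case: (b == 0%R).
  under eq_bigr do under eq_bigr do rewrite sum_const_nat split_ab.
  under eq_bigr do rewrite -big_distrr /=.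
  rewrite -big_distrr /=; congr (_ * _)%N.
  under eq_bigr do rewrite !big_split /= -big_distrr /= sum_indicator1 muln1 sum_const_nat.
  by rewrite !big_split /= sum_indicator1 -big_distrr /= sum_indicator1 sum_const_nat
    !muln1 mul2n -addnn addn1 add1n addSn.
rewrite -sum1_card big_mkcond /=; under eq_bigr do rewrite inE.
rewrite sum_pair /label; under eq_bigr do rewrite big_bool.
by rewrite big_sumType !sum_pair sum_option /= part_qq part_qbc part_abc; nia.
Qed.

End Gamma.

Unset Implicit Arguments.

Theorem theorem2 (F : finFieldType) (xi : F) (hxi : xi != 0) :
  let B : {set vertex F} :=
    (\bigcup_(c : F) ball (@gedge F) 1 (lab None 0 c, true))
    :|: ball (@gedge F) 1 (labqq (Some 0), true)
    :|: ((\bigcap_(c : F) ball (@gedge F) 2 (lab None 0 c, true))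
          :&: ball (@gedge F) 2 (labqq (Some 0), true))
    :|: ball (@gedge F) 2 (labqq (Some xi), true) in
  perfect_dominating (@gedge F) B /\
  #|B| = (2 * (#|F| ^ 2 + 3 * #|F| + 1))%N.
Proof.
move=> B.
have -> : B = [set v | in_B xi v] by exact: Bset_explicit.
split; [exact: in_B_perfect hxi | exact: card_B hxi].
Qed.
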